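(* Let $\lambda_1,\lambda_2,\mu>0$, $p_{12},p_{21}\in[0,1]$, $r_1,r_2,h_1,h_2\ge0$, $c_1,c_2\in\mathbb{R}$. For nonnegative integers $Q_1,Q_2$ define $$\pi^{(2)}(Q_1,Q_2)=\mu\Big[(r_1-c_1)Q_1+(r_2-c_2)Q_2-(r_1+h_1)E_{Q_1,Q_2}[m_1]-(r_2+h_2)E_{Q_1,Q_2}[m_2]\Big],$$ where $(m_1,m_2)$ has the stationary distribution of the inventory CTMC with random replenishment and order levels $(Q_1,Q_2)$. Then $\pi^{(2)}$ is submodular: for all integers $Q_1,Q_2\ge0$, $$\pi^{(2)}(Q_1+1,Q_2+1)-\pi^{(2)}(Q_1+1,Q_2)-\pi^{(2)}(Q_1,Q_2+1)+\pi^{(2)}(Q_1,Q_2)\le0.$$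
   Context: Inventory CTMC with random replenishment and order levels $(Q_1,Q_2)$: state space $\{0,\dots,Q_1\}\times\{0,\dots,Q_2\}$; demand transitions: from $(i_1,i_2)$ with $i_1,i_2\ge1$, to $(i_1-1,i_2)$ at rate $\lambda_1$ and to $(i_1,i_2-1)$ at rate $\lambda_2$; from $(i_1,0)$ with $i_1\ge1$, to $(i_1-1,0)$ at rate $s_1=\lambda_1+\lambda_2p_{21}$; from $(0,i_2)$ with $i_2\ge1$, to $(0,i_2-1)$ at rate $s_2=\lambda_2+\lambda_1p_{12}$; no demand transitions out of $(0,0)$; from every state a replenishment transition to $(Q_1,Q_2)$ at rate $\mu$. $r_i,c_i,h_i$ are the retail price, unit purchase cost, and end-of-period holding cost of product $i$. *)

From Stdlib Require Import Reals Lra Lia Arith.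
Open Scope R_scope.

Definition demand_rate (l1 l2 p12 p21 : R) (i1 i2 j1 j2 : nat) : R :=
  match i1, i2 with
  | S k1, S k2 =>
      (if andb (Nat.eqb j1 k1) (Nat.eqb j2 (S k2)) then l1 else 0) +
      (if andb (Nat.eqb j1 (S k1)) (Nat.eqb j2 k2) then l2 else 0)
  | S k1, O => if andb (Nat.eqb j1 k1) (Nat.eqb j2 0) then l1 + l2 * p21 else 0
  | O, S k2 => if andb (Nat.eqb j1 0) (Nat.eqb j2 k2) then l2 + l1 * p12 else 0
  | O, O => 0
  end.

Definition rate (l1 l2 mu p12 p21 : R) (Q1 Q2 i1 i2 j1 j2 : nat) : R :=
  if andb (Nat.eqb i1 j1) (Nat.eqb i2 j2) then 0
  else demand_rate l1 l2 p12 p21 i1 i2 j1 j2 +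
       (if andb (Nat.eqb j1 Q1) (Nat.eqb j2 Q2) then mu else 0).

Definition ssum (Q1 Q2 : nat) (f : nat -> nat -> R) : R :=
  sum_f_R0 (fun i => sum_f_R0 (fun j => f i j) Q2) Q1.

Definition stationary (l1 l2 mu p12 p21 : R) (Q1 Q2 : nat) (pi : nat -> nat -> R) : Prop :=
  (forall i j, (i <= Q1)%nat -> (j <= Q2)%nat -> 0 <= pi i j) /\
  ssum Q1 Q2 pi = 1 /\
  (forall j1 j2, (j1 <= Q1)%nat -> (j2 <= Q2)%nat ->
     pi j1 j2 * ssum Q1 Q2 (fun k1 k2 => rate l1 l2 mu p12 p21 Q1 Q2 j1 j2 k1 k2)
     = ssum Q1 Q2 (fun i1 i2 => pi i1 i2 * rate l1 l2 mu p12 p21 Q1 Q2 i1 i2 j1 j2)).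

Definition E_m1 (Q1 Q2 : nat) (pi : nat -> nat -> R) : R :=
  ssum Q1 Q2 (fun i j => INR i * pi i j).
Definition E_m2 (Q1 Q2 : nat) (pi : nat -> nat -> R) : R :=
  ssum Q1 Q2 (fun i j => INR j * pi i j).

Definition profit2 (mu r1 r2 c1 c2 h1 h2 : R) (Q1 Q2 : nat) (pi : nat -> nat -> R) : R :=
  mu * ((r1 - c1) * INR Q1 + (r2 - c2) * INR Q2
        - (r1 + h1) * E_m1 Q1 Q2 pi - (r2 + h2) * E_m2 Q1 Q2 pi).

(* Let L be the generator of the inventory chain and D its demand part, so that
   L f (i) = D f (i) + mu (f(Q1,Q2) - f(i)) because every replenishment jumps
   to the order levels.  Global balance says that sum_i pi(i) L f (i) = 0 for
   every f.  If f solves the resolvent equation D f = mu f - mu u, this reads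
   mu f(Q1,Q2) - mu E_pi[u] = 0, i.e. E_pi[u] = f(Q1,Q2).  For u = m1 the
   solution is an explicit recursively defined function of the state (the mean
   level of product 1 at an exponential time of rate mu, without
   replenishment), and for u = m2 the same function with the products swapped.
   These functions are supermodular by a double induction on the recursion,
   and the cross difference of pi^(2) is minus a nonnegative combination of
   their cross differences. *)
From Stdlib Require Import Reals Lra Lia Bool.
Open Scope R_scope.

Lemma ssum_ext Q1 Q2 f g :
  (forall i j, (i <= Q1)%nat -> (j <= Q2)%nat -> f i j = g i j) ->
  ssum Q1 Q2 f = ssum Q1 Q2 g.
Proof. intros H. unfold ssum. apply sum_eq. intros i Hi. apply sum_eq. auto. Qed.

Lemma ssum_plus Q1 Q2 f g :
  ssum Q1 Q2 (fun i j => f i j + g i j) = ssum Q1 Q2 f + ssum Q1 Q2 g.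
Proof. unfold ssum. rewrite <- plus_sum. apply sum_eq. intros. apply plus_sum. Qed.

Lemma ssum_minus Q1 Q2 f g :
  ssum Q1 Q2 (fun i j => f i j - g i j) = ssum Q1 Q2 f - ssum Q1 Q2 g.
Proof. unfold ssum. rewrite <- minus_sum. apply sum_eq. intros. apply minus_sum. Qed.

Lemma ssum_scal Q1 Q2 c f : ssum Q1 Q2 (fun i j => c * f i j) = c * ssum Q1 Q2 f.
Proof.
  unfold ssum. rewrite scal_sum. apply sum_eq. intros.
  rewrite Rmult_comm, scal_sum. apply sum_eq. intros. ring.
Qed.

Lemma ssum_const0 Q1 Q2 : ssum Q1 Q2 (fun _ _ => 0) = 0.
Proof.
  unfold ssum. rewrite (sum_eq _ (fun _ => 0)); [rewrite sum_cte; ring|].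
  intros. rewrite sum_cte. ring.
Qed.

Lemma sum_f_R0_exchange (F : nat -> nat -> R) n m :
  sum_f_R0 (fun i => sum_f_R0 (fun j => F i j) m) n =
  sum_f_R0 (fun j => sum_f_R0 (fun i => F i j) n) m.
Proof. induction n; simpl; [reflexivity|]. rewrite IHn, <- plus_sum. reflexivity. Qed.

Lemma ssum_exchange Q1 Q2 P1 P2 (F : nat -> nat -> nat -> nat -> R) :
  ssum Q1 Q2 (fun i1 i2 => ssum P1 P2 (fun k1 k2 => F i1 i2 k1 k2)) =
  ssum P1 P2 (fun k1 k2 => ssum Q1 Q2 (fun i1 i2 => F i1 i2 k1 k2)).
Proof.
  unfold ssum.
  transitivity (sum_f_R0 (fun i1 => sum_f_R0 (fun k1 => sum_f_R0 (fun i2 =>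
     sum_f_R0 (fun k2 => F i1 i2 k1 k2) P2) Q2) P1) Q1).
  { apply sum_eq; intros. apply sum_f_R0_exchange. }
  rewrite sum_f_R0_exchange. apply sum_eq; intros k1 _.
  transitivity (sum_f_R0 (fun i1 => sum_f_R0 (fun k2 => sum_f_R0 (fun i2 =>
     F i1 i2 k1 k2) Q2) P2) Q1).
  { apply sum_eq; intros. apply sum_f_R0_exchange. }
  apply sum_f_R0_exchange.
Qed.

Lemma sum_f_R0_indicator c b n : (b <= n)%nat ->
  sum_f_R0 (fun j => if Nat.eqb j b then c else 0) n = c.
Proof.
  induction n as [|n IH]; intros Hb.
  - replace b with 0%nat by lia. reflexivity.
  - rewrite tech5. destruct (Nat.eqb_spec (S n) b) as [<-|Hne].
    + rewrite (sum_eq _ (fun _ => 0)); [rewrite sum_cte; ring|].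
      intros i Hi. destruct (Nat.eqb_spec i (S n)); [lia|reflexivity].
    + rewrite IH by lia. ring.
Qed.

Lemma ssum_indicator Q1 Q2 a b c : (a <= Q1)%nat -> (b <= Q2)%nat ->
  ssum Q1 Q2 (fun k1 k2 => if Nat.eqb k1 a && Nat.eqb k2 b then c else 0) = c.
Proof.
  intros Ha Hb. unfold ssum.
  rewrite (sum_eq _ (fun i => if Nat.eqb i a then c else 0)).
  - apply sum_f_R0_indicator, Ha.
  - intros i _. destruct (Nat.eqb i a); simpl.
    + apply sum_f_R0_indicator, Hb.
    + rewrite sum_cte. ring.
Qed.

Definition demand_drift (l1 l2 p12 p21 : R) (f : nat -> nat -> R) (i1 i2 : nat) : R :=
  match i1, i2 with
  | S a, S b => l1 * (f a (S b) - f i1 i2) + l2 * (f (S a) b - f i1 i2)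
  | S a, O => (l1 + l2 * p21) * (f a O - f i1 i2)
  | O, S b => (l2 + l1 * p12) * (f O b - f i1 i2)
  | O, O => 0
  end.

Lemma rate_mul_diff l1 l2 mu p12 p21 Q1 Q2 f i1 i2 k1 k2 :
  rate l1 l2 mu p12 p21 Q1 Q2 i1 i2 k1 k2 * (f k1 k2 - f i1 i2) =
  demand_rate l1 l2 p12 p21 i1 i2 k1 k2 * (f k1 k2 - f i1 i2) +
  (if Nat.eqb k1 Q1 && Nat.eqb k2 Q2 then mu * (f Q1 Q2 - f i1 i2) else 0).
Proof.
  unfold rate. destruct (Nat.eqb i1 k1 && Nat.eqb i2 k2) eqn:Hself.
  - apply andb_true_iff in Hself as [E1 E2].
    apply Nat.eqb_eq in E1, E2. subst.
    destruct (Nat.eqb_spec k1 Q1), (Nat.eqb_spec k2 Q2); simpl; subst; ring.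
  - destruct (Nat.eqb_spec k1 Q1), (Nat.eqb_spec k2 Q2); simpl; subst; ring.
Qed.

Lemma generator_eq l1 l2 mu p12 p21 Q1 Q2 f i1 i2 :
  (i1 <= Q1)%nat -> (i2 <= Q2)%nat ->
  ssum Q1 Q2 (fun k1 k2 => rate l1 l2 mu p12 p21 Q1 Q2 i1 i2 k1 k2 * (f k1 k2 - f i1 i2)) =
  demand_drift l1 l2 p12 p21 f i1 i2 + mu * (f Q1 Q2 - f i1 i2).
Proof.
  intros H1 H2.
  rewrite (ssum_ext _ _ _ _ (fun k1 k2 _ _ => rate_mul_diff l1 l2 mu p12 p21 Q1 Q2 f i1 i2 k1 k2)).
  rewrite ssum_plus, ssum_indicator by auto. f_equal.
  destruct i1 as [|a], i2 as [|b]; simpl.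
  - rewrite (ssum_ext _ _ _ (fun _ _ => 0)) by (intros; ring). apply ssum_const0.
  - rewrite <- (ssum_indicator Q1 Q2 0 b ((l2 + l1 * p12) * (f 0%nat b - f 0%nat (S b)))) by lia.
    apply ssum_ext; intros k1 k2 _ _.
    destruct (Nat.eqb_spec k1 0), (Nat.eqb_spec k2 b); simpl; subst; ring.
  - rewrite <- (ssum_indicator Q1 Q2 a 0 ((l1 + l2 * p21) * (f a 0%nat - f (S a) 0%nat))) by lia.
    apply ssum_ext; intros k1 k2 _ _.
    destruct (Nat.eqb_spec k1 a), (Nat.eqb_spec k2 0); simpl; subst; ring.
  - rewrite <- (ssum_indicator Q1 Q2 a (S b) (l1 * (f a (S b) - f (S a) (S b)))) by lia.
    rewrite <- (ssum_indicator Q1 Q2 (S a) b (l2 * (f (S a) b - f (S a) (S b)))) by lia.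
    rewrite <- ssum_plus. apply ssum_ext; intros k1 k2 _ _.
    destruct (Nat.eqb_spec k1 a), (Nat.eqb_spec k2 (S b)), (Nat.eqb_spec k1 (S a)),
      (Nat.eqb_spec k2 b); simpl; subst; try lia; ring.
Qed.

Lemma stationary_generator_mean l1 l2 mu p12 p21 Q1 Q2 pi f :
  stationary l1 l2 mu p12 p21 Q1 Q2 pi ->
  ssum Q1 Q2 (fun i1 i2 => pi i1 i2 *
    ssum Q1 Q2 (fun k1 k2 => rate l1 l2 mu p12 p21 Q1 Q2 i1 i2 k1 k2 * (f k1 k2 - f i1 i2))) = 0.
Proof.
  intros [_ [_ Hbal]].
  set (r := rate l1 l2 mu p12 p21 Q1 Q2).
  rewrite (ssum_ext _ _ _ (fun i1 i2 =>
     ssum Q1 Q2 (fun k1 k2 => pi i1 i2 * r i1 i2 k1 k2 * f k1 k2) -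
     f i1 i2 * (pi i1 i2 * ssum Q1 Q2 (fun k1 k2 => r i1 i2 k1 k2)))).
  2: { intros i j _ _.
       rewrite (ssum_ext _ _ (fun k1 k2 => pi i j * r i j k1 k2 * f k1 k2)
                  (fun k1 k2 => pi i j * (r i j k1 k2 * f k1 k2))) by (intros; ring).
       rewrite (ssum_ext _ _ (fun k1 k2 => r i j k1 k2 * (f k1 k2 - f i j))
                  (fun k1 k2 => r i j k1 k2 * f k1 k2 - f i j * r i j k1 k2)) by (intros; ring).
       rewrite ssum_minus, !ssum_scal.
       change (ssum Q1 Q2 (r i j)) with (ssum Q1 Q2 (fun k1 k2 => r i j k1 k2)). ring. }
  rewrite ssum_minus.
  rewrite (ssum_ext _ _
     (fun i1 i2 => f i1 i2 * (pi i1 i2 * ssum Q1 Q2 (fun k1 k2 => r i1 i2 k1 k2)))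
     (fun i1 i2 => ssum Q1 Q2 (fun k1 k2 => pi k1 k2 * r k1 k2 i1 i2 * f i1 i2))).
  2: { intros i j Hi Hj. unfold r. rewrite Hbal by auto. rewrite <- ssum_scal.
       apply ssum_ext. intros. ring. }
  rewrite (ssum_exchange Q1 Q2 Q1 Q2 (fun i1 i2 k1 k2 => pi k1 k2 * r k1 k2 i1 i2 * f i1 i2)).
  ring.
Qed.

Lemma stationary_mean_of_resolvent l1 l2 mu p12 p21 Q1 Q2 pi f u : 0 < mu ->
  stationary l1 l2 mu p12 p21 Q1 Q2 pi ->
  (forall i1 i2, demand_drift l1 l2 p12 p21 f i1 i2 = mu * f i1 i2 - mu * u i1 i2) ->
  ssum Q1 Q2 (fun i j => u i j * pi i j) = f Q1 Q2.
Proof.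
  intros Hmu HS Hres.
  pose proof (stationary_generator_mean _ _ _ _ _ _ _ _ f HS) as Z.
  destruct HS as [_ [Hsum _]].
  rewrite (ssum_ext _ _ _ (fun i j => mu * f Q1 Q2 * pi i j - mu * (u i j * pi i j))) in Z.
  2: { intros i j Hi Hj. rewrite generator_eq, Hres by auto. ring. }
  rewrite ssum_minus, !ssum_scal, Hsum in Z.
  apply Rmult_eq_reg_l with mu; lra.
Qed.

(* [mean_level mu la lb s a b] solves the resolvent equation for u = first
   coordinate, where the first product is depleted at rate [la] (rate [s] once
   the second one is out of stock) and the second at rate [lb]. *)
Fixpoint mean_level (mu la lb s : R) (a : nat) : nat -> R :=
  match a with
  | O => fun _ => 0
  | S a' => let g := mean_level mu la lb s a' in
      fix g' (b : nat) : R := match b with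
        | O => (mu * INR (S a') + s * g O) / (mu + s)
        | S b' => (mu * INR (S a') + la * g (S b') + lb * g' b') / (mu + la + lb)
      end
  end.

Lemma mean_level_S0 mu la lb s a : 0 < mu + s ->
  (mu + s) * mean_level mu la lb s (S a) 0 = mu * INR (S a) + s * mean_level mu la lb s a 0.
Proof.
  intros H. change (mean_level mu la lb s (S a) 0)
    with ((mu * INR (S a) + s * mean_level mu la lb s a 0) / (mu + s)).
  field. lra.
Qed.

Lemma mean_level_SS mu la lb s a b : 0 < mu + la + lb ->
  (mu + la + lb) * mean_level mu la lb s (S a) (S b) =
  mu * INR (S a) + la * mean_level mu la lb s a (S b) + lb * mean_level mu la lb s (S a) b.
Proof.
  intros H. change (mean_level mu la lb s (S a) (S b)) with
    ((mu * INR (S a) + la * mean_level mu la lb s a (S b)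
      + lb * mean_level mu la lb s (S a) b) / (mu + la + lb)).
  field. lra.
Qed.

Lemma nonneg_of_pos_mul_eq c y z : 0 < c -> 0 <= z -> c * y = z -> 0 <= y.
Proof. intros. destruct (Rle_or_lt 0 y); [auto | nra]. Qed.

Section MeanLevelSupermodular.

Variables mu la lb s : R.
Hypotheses (Hmu : 0 < mu) (Hla : 0 < la) (Hlb : 0 < lb) (Hs : la <= s).

Let G := mean_level mu la lb s.
Let D a b := G (S a) b - G a b.
Let E a b := D a (S b) - D a b.

Lemma diff_00 : (mu + s) * D 0 0 = mu.
Proof.
  unfold D, G. rewrite Rmult_minus_distr_l, mean_level_S0 by lra. simpl. ring.
Qed.

Lemma diff_S0 a : (mu + s) * D (S a) 0 = mu + s * D a 0.
Proof.
  unfold D, G. rewrite Rmult_minus_distr_l, !mean_level_S0 by lra.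
  rewrite (S_INR (S a)). ring.
Qed.

Lemma diff_0S b : (mu + la + lb) * D 0 (S b) = mu + lb * D 0 b.
Proof.
  unfold D, G. rewrite !Rmult_minus_distr_l, mean_level_SS by lra. simpl. ring.
Qed.

Lemma diff_SS a b :
  (mu + la + lb) * D (S a) (S b) = mu + la * D a (S b) + lb * D (S a) b.
Proof.
  unfold D, G. rewrite Rmult_minus_distr_l, !mean_level_SS by lra.
  rewrite (S_INR (S a)). ring.
Qed.

Lemma diff_increment_nonneg_0 a : 0 <= D (S a) 0 - D a 0.
Proof.
  assert (H00 : 0 <= D 0 0).
  { apply (nonneg_of_pos_mul_eq (mu + s) _ mu); [lra | lra | apply diff_00]. }
  induction a as [|a IH].
  - apply (nonneg_of_pos_mul_eq (mu + s) _ (s * D 0 0)); [lra | nra |].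
    rewrite Rmult_minus_distr_l, diff_S0, diff_00. ring.
  - apply (nonneg_of_pos_mul_eq (mu + s) _ (s * (D (S a) 0 - D a 0))); [lra | nra |].
    rewrite Rmult_minus_distr_l, !diff_S0. ring.
Qed.

Lemma cross_diff_nonneg_0 a : 0 <= E a 0.
Proof.
  (* Uses [la <= s]: product 1 sells faster once product 2 is out of stock. *)
  induction a as [|a IH]; unfold E in *.
  - apply (nonneg_of_pos_mul_eq ((mu + s) * (mu + la + lb)) _ (mu * (s - la))); [nra | nra |].
    pose proof diff_00. pose proof (diff_0S 0). nra.
  - apply (nonneg_of_pos_mul_eq (mu + la + lb) _
             ((s - la) * (D (S a) 0 - D a 0) + la * (D a 1 - D a 0))).
    + lra.
    + pose proof (diff_increment_nonneg_0 a).
      apply Rplus_le_le_0_compat; apply Rmult_le_pos; lra.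
    + rewrite Rmult_minus_distr_l, diff_SS. pose proof (diff_S0 a). lra.
Qed.

Lemma cross_diff_nonneg a b : 0 <= E a b.
Proof.
  revert a. induction b as [|b IHb]; [exact cross_diff_nonneg_0|].
  induction a as [|a IHa].
  - apply (nonneg_of_pos_mul_eq (mu + la + lb) _ (lb * E 0 b));
      [lra | apply Rmult_le_pos; [lra | apply IHb] |].
    unfold E. rewrite Rmult_minus_distr_l, !diff_0S. ring.
  - apply (nonneg_of_pos_mul_eq (mu + la + lb) _ (la * E a (S b) + lb * E (S a) b));
      [lra | |].
    + apply Rplus_le_le_0_compat; apply Rmult_le_pos; auto; lra.
    + unfold E. rewrite Rmult_minus_distr_l, !diff_SS. ring.
Qed.

Lemma mean_level_supermodular a b :
  0 <= G (S a) (S b) - G (S a) b - G a (S b) + G a b.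
Proof. pose proof (cross_diff_nonneg a b). unfold E, D in *. lra. Qed.

End MeanLevelSupermodular.

Lemma E_m1_stationary l1 l2 mu p12 p21 Q1 Q2 pi :
  0 < mu -> 0 < l1 -> 0 < l2 -> 0 <= p21 ->
  stationary l1 l2 mu p12 p21 Q1 Q2 pi ->
  E_m1 Q1 Q2 pi = mean_level mu l1 l2 (l1 + l2 * p21) Q1 Q2.
Proof.
  intros Hmu H1 H2 Hp HS. apply (stationary_mean_of_resolvent l1 l2 mu p12 p21); auto.
  intros [|a] [|b]; cbv beta iota delta [demand_drift].
  - simpl. ring.
  - simpl. ring.
  - assert (Hpos : 0 < mu + (l1 + l2 * p21)) by nra.
    pose proof (mean_level_S0 mu l1 l2 (l1 + l2 * p21) a Hpos). lra.
  - pose proof (mean_level_SS mu l1 l2 (l1 + l2 * p21) a b ltac:(lra)). lra.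
Qed.

Lemma E_m2_stationary l1 l2 mu p12 p21 Q1 Q2 pi :
  0 < mu -> 0 < l1 -> 0 < l2 -> 0 <= p12 ->
  stationary l1 l2 mu p12 p21 Q1 Q2 pi ->
  E_m2 Q1 Q2 pi = mean_level mu l2 l1 (l2 + l1 * p12) Q2 Q1.
Proof.
  intros Hmu H1 H2 Hp HS.
  apply (stationary_mean_of_resolvent l1 l2 mu p12 p21 Q1 Q2 pi
           (fun i j => mean_level mu l2 l1 (l2 + l1 * p12) j i)); auto.
  intros [|a] [|b]; cbv beta iota delta [demand_drift].
  - simpl. ring.
  - assert (Hpos : 0 < mu + (l2 + l1 * p12)) by nra.
    pose proof (mean_level_S0 mu l2 l1 (l2 + l1 * p12) b Hpos). lra.
  - simpl. ring.
  - pose proof (mean_level_SS mu l2 l1 (l2 + l1 * p12) b a ltac:(lra)). lra.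
Qed.

Lemma profit2_stationary l1 l2 mu p12 p21 r1 r2 c1 c2 h1 h2 Q1 Q2 pi :
  0 < mu -> 0 < l1 -> 0 < l2 -> 0 <= p12 -> 0 <= p21 ->
  stationary l1 l2 mu p12 p21 Q1 Q2 pi ->
  profit2 mu r1 r2 c1 c2 h1 h2 Q1 Q2 pi =
  mu * ((r1 - c1) * INR Q1 + (r2 - c2) * INR Q2
        - (r1 + h1) * mean_level mu l1 l2 (l1 + l2 * p21) Q1 Q2
        - (r2 + h2) * mean_level mu l2 l1 (l2 + l1 * p12) Q2 Q1).
Proof.
  intros. unfold profit2.
  rewrite (E_m1_stationary l1 l2 mu p12 p21), (E_m2_stationary l1 l2 mu p12 p21 Q1 Q2 pi)
    by assumption.
  reflexivity.
Qed.

Theorem theorem4 (l1 l2 mu p12 p21 r1 r2 c1 c2 h1 h2 : R)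
  (Hl1 : 0 < l1) (Hl2 : 0 < l2) (Hmu : 0 < mu)
  (Hp12 : 0 <= p12 <= 1) (Hp21 : 0 <= p21 <= 1)
  (Hr1 : 0 <= r1) (Hr2 : 0 <= r2) (Hh1 : 0 <= h1) (Hh2 : 0 <= h2)
  (Q1 Q2 : nat) (pi00 pi10 pi01 pi11 : nat -> nat -> R)
  (S00 : stationary l1 l2 mu p12 p21 Q1 Q2 pi00)
  (S10 : stationary l1 l2 mu p12 p21 (S Q1) Q2 pi10)
  (S01 : stationary l1 l2 mu p12 p21 Q1 (S Q2) pi01)
  (S11 : stationary l1 l2 mu p12 p21 (S Q1) (S Q2) pi11) :
  profit2 mu r1 r2 c1 c2 h1 h2 (S Q1) (S Q2) pi11
  - profit2 mu r1 r2 c1 c2 h1 h2 (S Q1) Q2 pi10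
  - profit2 mu r1 r2 c1 c2 h1 h2 Q1 (S Q2) pi01
  + profit2 mu r1 r2 c1 c2 h1 h2 Q1 Q2 pi00 <= 0.
Proof.
  destruct Hp12 as [Hp12 _], Hp21 as [Hp21 _].
  erewrite !(profit2_stationary l1 l2 mu p12 p21) by eassumption.
  set (G1 := mean_level mu l1 l2 (l1 + l2 * p21)).
  set (G2 := mean_level mu l2 l1 (l2 + l1 * p12)).
  assert (X : 0 <= G1 (S Q1) (S Q2) - G1 (S Q1) Q2 - G1 Q1 (S Q2) + G1 Q1 Q2)
    by (apply mean_level_supermodular; nra).
  assert (Y : 0 <= G2 (S Q2) (S Q1) - G2 (S Q2) Q1 - G2 Q2 (S Q1) + G2 Q2 Q1)
    by (apply mean_level_supermodular; nra).
  assert (0 <= mu * (r1 + h1)) by (apply Rmult_le_pos; lra).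
  assert (0 <= mu * (r2 + h2)) by (apply Rmult_le_pos; lra).
  nra.
Qed.
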